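(* Let $m$ be a positive integer, $\lambda\in\mathbb{R}$ with $|\lambda-m|<1/10$, $R=\sqrt\lambda$, $w=(0,2)$. If $v\in V_2$ satisfies $B:=|\langle v,w\rangle|\ge R^{1/3}$, then, as $R\to\infty$, $$|S_w(v)|\ll\frac{\log^2 B}{B^2},$$ with an absolute implied constant.
   Context: For $v\in\mathbb{Z}^2$, $c(v)=\frac{1}{|v|^2-\lambda}$ and $C(v,w)=c(v)c(v+w)$. $V_2=\{v\in\mathbb{Z}^2: C(v,w)<0,\ |v|^2\ne m,\ |v+w|^2\ne m,\ \sqrt R/2\le|\langle v,w\rangle|\le3R\}$. $\operatorname{Nbr}_w(v)=\{C(v-w,w)+C(v,w),\ C(v,w)+C(v+w,w)\}$ and $S_w(v)$ is the element of $\operatorname{Nbr}_w(v)$ of smallest absolute value (the smaller one in case of a tie). *)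

From Stdlib Require Import Reals ZArith.
Open Scope R_scope.

Definition vZ2 : Type := (Z * Z)%type.
Definition vadd (v w : vZ2) : vZ2 := ((fst v + fst w)%Z, (snd v + snd w)%Z).
Definition vsub (v w : vZ2) : vZ2 := ((fst v - fst w)%Z, (snd v - snd w)%Z).
Definition ip (v w : vZ2) : R := IZR (fst v * fst w + snd v * snd w)%Z.
Definition nsq (v : vZ2) : R := ip v v.

(* c(v) = 1/(|v|^2 - lambda)  (Stdlib convention: / 0 = 0) *)
Definition c (lam : R) (v : vZ2) : R := / (nsq v - lam).
Definition CC (lam : R) (v w : vZ2) : R := c lam v * c lam (vadd v w).

(* V_2 membership, with R = sqrt lambda *)
Definition inV2 (m : nat) (lam : R) (w v : vZ2) : Prop :=
  CC lam v w < 0 /\ nsq v <> INR m /\ nsq (vadd v w) <> INR m /\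
  sqrt (sqrt lam) / 2 <= Rabs (ip v w) <= 3 * sqrt lam.

Definition Sw (lam : R) (w v : vZ2) : R :=
  let a := CC lam (vsub v w) w + CC lam v w in
  let b := CC lam v w + CC lam (vadd v w) w in
  if Rlt_dec (Rabs a) (Rabs b) then a
  else if Rlt_dec (Rabs b) (Rabs a) then b
  else Rmin a b.

Definition w0 : vZ2 := (0%Z, 2%Z).

(* Write [x_u = |u|^2 - lambda] and [t = <v,w>].  Since
   [|u +- w|^2 = |u|^2 +- 2<u,w> + |w|^2], the neighbour sum centred at [u],
   [c(u) (c(u-w) + c(u+w))], equals [2 (x_u + 4) / (x_u ((x_u + 4)^2 - 4 <u,w>^2))].
   As [C(v,w) < 0], [x_v] and [x_(v+w) = x_v + 2t + 4] have opposite signs, so at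
   whichever of [v], [v+w] has the smaller [|x_u|] the denominator is at least
   [|x_u| t^2].  Since [|x_u| >= 9/10] by integrality of [|u|^2], this gives
   [|S_w(v)| <= 11 / B^2], and the logarithmic factor only absorbs the constant. *)
From Stdlib Require Import Reals ZArith Lra Lia Psatz.
Open Scope R_scope.

Lemma vadd_vsub (u w : vZ2) : vadd (vsub u w) w = u.
Proof. destruct u, w; unfold vadd, vsub; simpl; f_equal; ring. Qed.

Lemma vsub_vadd (u w : vZ2) : vsub (vadd u w) w = u.
Proof. destruct u, w; unfold vadd, vsub; simpl; f_equal; ring. Qed.

Lemma ip_vadd_l (u v w : vZ2) : ip (vadd u v) w = ip u w + ip v w.
Proof. unfold ip, vadd; simpl; rewrite <- plus_IZR; f_equal; ring. Qed.

Lemma nsq_vadd (u w : vZ2) : nsq (vadd u w) = nsq u + 2 * ip u w + nsq w.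
Proof. unfold nsq, ip, vadd; simpl; rewrite <- mult_IZR, <- !plus_IZR; f_equal; ring. Qed.

Lemma nsq_vsub (u w : vZ2) : nsq (vsub u w) = nsq u - 2 * ip u w + nsq w.
Proof.
  unfold nsq, ip, vsub; simpl.
  rewrite <- mult_IZR, <- minus_IZR, <- plus_IZR; f_equal; ring.
Qed.

Lemma nsq_w0 : nsq w0 = 4.
Proof. reflexivity. Qed.

Lemma nsq_sub_lam_ge (m : nat) (lam : R) (u : vZ2) :
  Rabs (lam - INR m) < 1 / 10 -> nsq u <> INR m -> 9 / 10 <= Rabs (nsq u - lam).
Proof.
  intros Hlam Hu. unfold nsq, ip in *. rewrite INR_IZR_INZ in *.
  set (z := (fst u * fst u + snd u * snd u)%Z) in *.
  assert (Hz : z <> Z.of_nat m) by (intro E; apply Hu; rewrite E; reflexivity).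
  destruct (Z.lt_total z (Z.of_nat m)) as [h | [h | h]]; [| contradiction |].
  - assert (h1 : (z + 1 <= Z.of_nat m)%Z) by lia.
    apply IZR_le in h1; rewrite plus_IZR in h1. split_Rabs; lra.
  - assert (h1 : (Z.of_nat m + 1 <= z)%Z) by lia.
    apply IZR_le in h1; rewrite plus_IZR in h1. split_Rabs; lra.
Qed.

Definition nbr_sum (lam : R) (w u : vZ2) : R :=
  c lam (vsub u w) * c lam u + c lam u * c lam (vadd u w).

Lemma Sw_le_nbr_sum (lam : R) (w v : vZ2) :
  Rabs (Sw lam w v) <= Rabs (nbr_sum lam w v) /\
  Rabs (Sw lam w v) <= Rabs (nbr_sum lam w (vadd v w)).
Proof.
  unfold Sw, nbr_sum, CC; cbv zeta. rewrite vadd_vsub, vsub_vadd.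
  set (a := c lam (vsub v w) * c lam v + c lam v * c lam (vadd v w)).
  set (b := c lam v * c lam (vadd v w) + c lam (vadd v w) * c lam (vadd (vadd v w) w)).
  destruct (Rlt_dec (Rabs a) (Rabs b)); [lra |].
  destruct (Rlt_dec (Rabs b) (Rabs a)); [lra |].
  unfold Rmin; destruct (Rle_dec a b); lra.
Qed.

Lemma nbr_sum_eq (lam : R) (w u : vZ2) :
  nbr_sum lam w u =
  / (nsq u - lam - 2 * ip u w + nsq w) * / (nsq u - lam) +
  / (nsq u - lam) * / (nsq u - lam + 2 * ip u w + nsq w).
Proof.
  unfold nbr_sum, c; rewrite nsq_vadd, nsq_vsub.
  replace (nsq u - 2 * ip u w + nsq w - lam) with (nsq u - lam - 2 * ip u w + nsq w) by ring.
  replace (nsq u + 2 * ip u w + nsq w - lam) with (nsq u - lam + 2 * ip u w + nsq w) by ring.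
  reflexivity.
Qed.

Lemma centered_sum_bound (x s d t : R) :
  0 < d -> 2 * d <= 9 * Rabs x -> t <> 0 -> t ^ 2 <= Rabs ((x + d) ^ 2 - 4 * s ^ 2) ->
  Rabs (/ (x - 2 * s + d) * / x + / x * / (x + 2 * s + d)) <= 11 / t ^ 2.
Proof.
  intros Hd Hx Ht HD.
  set (D := (x + d) ^ 2 - 4 * s ^ 2) in *.
  assert (Ht2 : 0 < t ^ 2) by (apply Rsqr_pos_lt in Ht; unfold Rsqr in Ht; simpl; lra).
  assert (HaD : 0 < Rabs D) by lra.
  assert (HD0 : D <> 0) by (intro E; rewrite E, Rabs_R0 in HaD; lra).
  assert (Hax : 0 < Rabs x) by lra.
  assert (Hx0 : x <> 0) by (intro E; rewrite E, Rabs_R0 in Hax; lra).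
  assert (Hfac : (x - 2 * s + d) * (x + 2 * s + d) = D) by (unfold D; ring).
  assert (Hm : x - 2 * s + d <> 0) by (intro E; rewrite E in Hfac; lra).
  assert (Hp : x + 2 * s + d <> 0) by (intro E; rewrite E in Hfac; lra).
  replace (/ (x - 2 * s + d) * / x + / x * / (x + 2 * s + d))
    with (2 * (x + d) * / x * / D) by (rewrite <- Hfac; field; auto).
  rewrite !Rabs_mult, !Rabs_inv.
  assert (Hnum : Rabs 2 * Rabs (x + d) <= 11 * Rabs x)
    by (rewrite Rabs_right by lra; split_Rabs; lra).
  apply Rle_trans with (11 * Rabs x * / Rabs x * / Rabs D).
  - repeat apply Rmult_le_compat_r; try (left; apply Rinv_0_lt_compat; lra); lra.
  - rewrite Rinv_r_simpl_l by lra. unfold Rdiv. apply Rmult_le_compat_l; [lra |].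
    apply Rinv_le_contravar; lra.
Qed.

Lemma sq_le_abs_sub (a s t : R) : t ^ 2 <= 4 * s ^ 2 - a ^ 2 -> t ^ 2 <= Rabs (a ^ 2 - 4 * s ^ 2).
Proof. intro H; rewrite Rabs_left1; nra. Qed.

Lemma opposite_sign_denominator (x t : R) :
  16 <= Rabs t -> x * (x + 2 * t + 4) < 0 ->
  t ^ 2 <= Rabs ((x + 4) ^ 2 - 4 * t ^ 2) \/
  t ^ 2 <= Rabs ((x + 2 * t + 4 + 4) ^ 2 - 4 * (t + 4) ^ 2).
Proof.
  intros Ht Hxy. set (y := x + 2 * t + 4) in *.
  (* Centre at whichever of [x], [y] is smaller in absolute value: having opposite
     signs and differing by [2t + 4], that one lies within [|t| + 2] of zero. *)
  assert (Hsign : (16 <= t /\ x < 0 < y) \/ (t <= -16 /\ y < 0 < x)).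
  { unfold y in *; split_Rabs; [right | left]; split; try lra; split; nra. }
  destruct (Rle_dec (Rabs x) (Rabs y)); [left | right]; apply sq_le_abs_sub;
    destruct Hsign as [[Ht' [Hx Hy]] | [Ht' [Hy Hx]]]; unfold y in *.
  - assert (- t <= x + 4 <= t) by (split_Rabs; lra). nra.
  - assert (t - 2 <= x + 4 <= - t + 2) by (split_Rabs; lra). nra.
  - assert (- (t + 6) <= x + 2 * t + 4 + 4 <= t + 6) by (split_Rabs; lra). nra.
  - assert (t + 4 <= x + 2 * t + 4 + 4 <= - (t + 4)) by (split_Rabs; lra). nra.
Qed.

Lemma prod_lt0_of_CC_lt0 (lam : R) (v w : vZ2) :
  CC lam v w < 0 -> (nsq v - lam) * (nsq (vadd v w) - lam) < 0.
Proof.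
  unfold CC, c; rewrite <- Rinv_mult; intro H.
  destruct (Rlt_or_le ((nsq v - lam) * (nsq (vadd v w) - lam)) 0) as [Hneg | Hnn]; [exact Hneg |].
  destruct Hnn as [Hpos | Hzero].
  - apply Rinv_0_lt_compat in Hpos; lra.
  - rewrite <- Hzero, Rinv_0 in H; lra.
Qed.

Lemma Sw_w0_bound (m : nat) (lam : R) (v : vZ2) :
  Rabs (lam - INR m) < 1 / 10 -> inV2 m lam w0 v -> 16 <= Rabs (ip v w0) ->
  Rabs (Sw lam w0 v) <= 11 / ip v w0 ^ 2.
Proof.
  intros Hlam [HC [Hv [Hvw _]]] Ht.
  assert (Hx := nsq_sub_lam_ge m lam v Hlam Hv).
  assert (Hy := nsq_sub_lam_ge m lam (vadd v w0) Hlam Hvw).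
  assert (Hxy := prod_lt0_of_CC_lt0 lam v w0 HC).
  set (t := ip v w0) in *. set (x := nsq v - lam) in *.
  assert (Ey : nsq (vadd v w0) - lam = x + 2 * t + 4) by (unfold x, t; rewrite nsq_vadd, nsq_w0; ring).
  assert (Es : ip (vadd v w0) w0 = t + 4) by (unfold t; rewrite ip_vadd_l; reflexivity).
  rewrite Ey in Hy, Hxy.
  assert (Ht0 : t <> 0) by (intro E; rewrite E, Rabs_R0 in Ht; lra).
  destruct (Sw_le_nbr_sum lam w0 v) as [Sv Svw].
  destruct (opposite_sign_denominator x t Ht Hxy) as [Hden | Hden].
  - apply (Rle_trans _ _ _ Sv). rewrite nbr_sum_eq, nsq_w0.
    apply centered_sum_bound; auto; unfold x in *; lra.
  - apply (Rle_trans _ _ _ Svw). rewrite nbr_sum_eq, nsq_w0, Ey, Es.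
    apply centered_sum_bound; auto; lra.
Qed.

Lemma exp_le_Rpower_third (a r : R) : exp (3 * a) <= r -> exp a <= Rpower r (1 / 3).
Proof.
  intro Hr.
  assert (H : Rpower (exp (3 * a)) (1 / 3) <= Rpower r (1 / 3))
    by (apply Rle_Rpower_l; [lra | split; [apply exp_pos | exact Hr]]).
  unfold Rpower at 1 in H; rewrite ln_exp in H.
  replace (1 / 3 * (3 * a)) with a in H by field. exact H.
Qed.

Lemma le_mul_ln_sq (K B : R) : 0 <= K -> 3 < B -> K / B ^ 2 <= K * ln B ^ 2 / B ^ 2.
Proof.
  intros HK HB.
  assert (Hln : 1 <= ln B).
  { rewrite <- (ln_exp 1). left; apply ln_increasing; [apply exp_pos |].
    pose proof exp_le_3; lra. }
  assert (Hsq : 1 <= ln B ^ 2) by (simpl; nra).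
  unfold Rdiv. apply Rmult_le_compat_r.
  - left; apply Rinv_0_lt_compat; simpl; nra.
  - nra.
Qed.

Theorem lemma5p4 :
  exists K R0 : R,
    forall (m : nat) (lam : R) (v : vZ2),
      (0 < m)%nat ->
      Rabs (lam - INR m) < 1 / 10 ->
      R0 <= sqrt lam ->
      inV2 m lam w0 v ->
      Rpower (sqrt lam) (1 / 3) <= Rabs (ip v w0) ->
      Rabs (Sw lam w0 v) <= K * (ln (Rabs (ip v w0))) ^ 2 / (Rabs (ip v w0)) ^ 2.
Proof.
  exists 11, (exp (3 * 16)). intros m lam v _ Hlam HR HV HB.
  assert (HB16 : 16 <= Rabs (ip v w0)).
  { pose proof (exp_le_Rpower_third 16 _ HR). pose proof (exp_ineq1_le 16). lra. }
  apply Rle_trans with (11 / Rabs (ip v w0) ^ 2).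
  - rewrite pow2_abs. exact (Sw_w0_bound m lam v Hlam HV HB16).
  - apply le_mul_ln_sq; lra.
Qed.
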